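(* Let $G$ be a finite graph with irreducible components $G_1,\dots,G_m$, and let $X$ be its graph C*-correspondence over $A=C(G^{(0)})$. Then for every tracial state $\tau$ of $A$, \[h_X^\tau=\max\{\log\lambda_{G_s}:G_s\text{ is communicated by some vertex }v\text{ with }\tau(p_v)\neq0\}.\]
   Context: $G$ is a finite directed graph with vertex set $G^{(0)}=\{v_1,\dots,v_n\}$, edge set $G^{(1)}$, source and range maps $s,r$; adjacency matrix $G_{ij}=\#\{e:s(e)=v_i,r(e)=v_j\}$. $A=C(G^{(0)})$ is spanned by orthogonal projections $p_v$, $v\in G^{(0)}$; tracial states of $A$ correspond to probability vectors $(\tau(p_{v}))_v$. The graph C*-correspondence $X$ is spanned over $A$ by vectors $x_e$, $e\in G^{(1)}$, with $\langle x_e,x_f\rangle=\delta_{e,f}p_{s(f)}$, $p_vx_e=\delta_{v,r(e)}x_e$, $x_ep_v=\delta_{s(e),v}x_e$; $\{x_e\}$ is a unit decomposition ($\sum_e\theta_{x_e,x_e}=1_X$). For words $\mu=\mu_k\cdots\mu_1$ in edges, $x_\mu=x_{\mu_k}\otimes\cdots\otimes x_{\mu_1}$. $h_X^\tau=\limsup_k k^{-1}\log\sum_{|\mu|=k}\tau(\langle x_\mu,x_\mu\rangle)$, with the convention that this is $0$ if the terms are eventually $0$. Irreducible components: the maximal strongly connected vertex classes, ordered so that $G$ is block upper triangular with irreducible diagonal blocks $G_1,\dots,G_m$ (a vertex on no cycle gives a component $[0]$). $\lambda_{G_s}$ is the spectral radius of $G_s$ ($0$ for $[0]$). $G_s$ is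 communicated by a vertex $v$ if there is a path (possibly of length $0$) starting at $v$ and ending at a vertex of $G_s$. Convention: $\log 0:=0$. *)

From HB Require Import structures.
From mathcomp Require Import all_boot all_order all_algebra.
From mathcomp Require Import all_classical all_reals all_analysis.
From mathcomp Require Import complex.
Set Implicit Arguments. Unset Strict Implicit. Unset Printing Implicit Defensive.
Import Order.TTheory GRing.Theory Num.Theory.
Local Open Scope ring_scope.

Section GraphCorr.
Variables (R : realType) (V E : finType) (s r : E -> V).

(* Elements of A = C(G^(0)) are functions V -> R; p_v = indicator of v. *)
Definition proj (v : V) : V -> R := fun w => (v == w)%:R.

(* For a in A and an edge f: <x_f, a . x_f> = a(r f) p_{s f}
   (from p_v x_f = delta_{v,r f} x_f and <x_f,x_f> = p_{s f}), and
   <x_f (x) y, a (x_f (x) y)> = <y, <x_f, a x_f> y> (interior tensor product).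
   [ip_word a mu] = <x_mu, a . x_mu>, with mu = [:: mu_k; ...; mu_1]
   (head of the list = outermost tensor factor mu_k). *)
Fixpoint ip_word (a : V -> R) (mu : seq E) : V -> R :=
  match mu with
  | [::] => a
  | f :: nu => ip_word (fun v => a (r f) * proj (s f) v) nu
  end.

Definition ip_self (mu : seq E) : V -> R := ip_word (fun _ => 1) mu.

(* A state of A = C(V) given by a probability vector t = (tau(p_v))_v. *)
Definition is_prob_vector (t : V -> R) : Prop :=
  (forall v, 0 <= t v) /\ \sum_v t v = 1.

Definition state_eval (t : V -> R) (a : V -> R) : R := \sum_v t v * a v.

Definition word_sum (t : V -> R) (k : nat) : R :=
  \sum_(mu : k.-tuple E) state_eval t (ip_self mu).

(* h_X^tau = limsup_k k^{-1} log(...); with ln 0 = 0 (mathcomp convention),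
   eventually-zero terms give 0, matching the paper's convention. *)
Definition entropy (t : V -> R) : \bar R :=
  limn_esup (fun k : nat => ((k%:R)^-1 * ln (word_sum t k))%:E).

Definition adj : rel V := fun v w => [exists f : E, (s f == v) && (r f == w)].
Definition reach (v w : V) : bool := connect adj v w.

(* The irreducible component (maximal strongly connected class) of u;
   a vertex on no cycle gives a singleton component with matrix [0]. *)
Definition component (u : V) : {set V} := [set w | reach u w && reach w u].

Definition sub_adj (C : {set V}) : 'M[R]_#|C| :=
  \matrix_(i, j) (#|[set f : E | (s f == enum_val i) && (r f == enum_val j)]|)%:R.

End GraphCorr.

(* Spectral radius of a real square matrix: the largest modulus of a complex
   root of its characteristic polynomial (0 for the empty matrix). *)
Definition spectral_radius (R : realType) (n : nat) (M : 'M[R]_n) : R :=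
  \big[Num.max/0]_(z <- sval (closed_field_poly_normal
                    (char_poly (map_mx (real_complex R) M))))
     ComplexField.Normc.normc z.

(* "G_s is communicated by v": a path from v to a vertex of G_s. *)
Definition communicated (V E : finType) (s r : E -> V) (C : {set V}) (v : V) : bool :=
  [exists w in C, reach s r v w].

(* Expanding the inner products, sum_{|mu|=k} tau(<x_mu, x_mu>) = sum_v tau(p_v) N_k(v),
   where N_k(v) is the number of edge paths of length k starting at v.  The growth
   rate of N_k(v) is the largest spectral radius of a component reachable from v.
   From below: a left eigenvector of the component matrix for an eigenvalue z
   bounds some row sum of its k-th power by |z|^k.  From above: by Cayley-Hamilton
   the entries of M^k are O(mu^k) for every mu above the spectral radius of M, and
   a path from v either stays in the component of v or leaves it along an edge
   towards a vertex from which strictly fewer vertices are reachable, which sets up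
   an induction.  Finally a component has spectral radius 0 or at least 1, since
   positive integer path counts cannot decay geometrically; so log is monotone on
   these values (with log 0 = 0) and the maximum of the logarithms is the
   logarithm of the maximum. *)

From Pilot Require Import Defs.
From HB Require Import structures.
From mathcomp Require Import all_boot all_order all_algebra.
From mathcomp Require Import all_classical all_reals all_analysis.
From mathcomp Require Import complex.
From mathcomp Require Import ring lra zify.
Import Order.TTheory GRing.Theory Num.Theory.
Import numFieldNormedType.Exports.
Set Implicit Arguments. Unset Strict Implicit. Unset Printing Implicit Defensive.
Local Open Scope ring_scope.

Section SpectralBounds.
Variable R : realType.
Local Notation C := R[i].
Local Open Scope complex_scope.
Local Notation normc := (@ComplexField.Normc.normc R).

Lemma normc_ge0 (x : C) : 0 <= normc x.
Proof. by case: x => a b; rewrite /= sqrtr_ge0. Qed.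

Lemma normcX (x : C) k : normc (x ^+ k) = normc x ^+ k.
Proof.
elim: k => [|k IH]; first by rewrite !expr0 ComplexField.Normc.normc1.
by rewrite !exprS ComplexField.Normc.normcM IH.
Qed.

Lemma ler_normc_sum (I : Type) (r : seq I) (F : I -> C) :
  normc (\sum_(i <- r) F i) <= \sum_(i <- r) normc (F i).
Proof.
elim: r => [|a r IH]; first by rewrite !big_nil ComplexField.Normc.normc0.
by rewrite !big_cons; apply: le_trans (le_normcD _ _) _; rewrite lerD2l.
Qed.

Lemma normc_real (a : R) : normc a%:C = `|a|.
Proof. by rewrite /= expr0n /= addr0 sqrtr_sqr. Qed.

(* Unrolling, a k = z^k a 0 + sum_(j < k) z^(k-1-j) b j: geometric sums of ratio
   normc z / mu < 1. *)
Lemma recurrence_geometric_bound (a b : nat -> C) (z : C) (mu K : R) :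
  normc z < mu -> (forall k, normc (b k) <= K * mu ^+ k) ->
  (forall k, a k.+1 = z * a k + b k) ->
  exists K', forall k, normc (a k) <= K' * mu ^+ k.
Proof.
move=> z_lt_mu b_bound a_rec; set zeta := normc z.
have zeta_ge0 : 0 <= zeta by apply: normc_ge0.
have gap_gt0 : 0 < mu - zeta by rewrite subr_gt0.
have K_ge0 : 0 <= K.
  by have := b_bound 0%N; rewrite expr0 mulr1; apply: le_trans (normc_ge0 _).
have unrolled k :
    normc (a k) <= normc (a 0%N) * zeta ^+ k + K * (mu ^+ k - zeta ^+ k) / (mu - zeta).
  elim: k => [|k IH]; first by rewrite !expr0 subrr mulr0 mul0r addr0 mulr1.
  rewrite a_rec; apply: le_trans (le_normcD _ _) _.
  rewrite ComplexField.Normc.normcM -/zeta.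
  apply: le_trans (lerD (ler_wpM2l zeta_ge0 IH) (b_bound k)) _.
  by rewrite le_eqVlt predU1l // !exprS; field; rewrite gt_eqF.
exists (normc (a 0%N) + K / (mu - zeta)) => k; apply: le_trans (unrolled k) _.
have zeta_le_mu : zeta ^+ k <= mu ^+ k.
  by rewrite lerXn2r ?nnegrE // ltW // (le_lt_trans zeta_ge0).
rewrite mulrDl lerD //; first by rewrite ler_wpM2l // normc_ge0.
rewrite mulrAC; apply: ler_wpM2l; first by rewrite divr_ge0 // ltW.
by rewrite lerBlDr lerDl exprn_ge0.
Qed.

Lemma comm_subr_scalar n (M : 'M[C]_n.+1) (a b : C) : GRing.comm (M - a%:M) (M - b%:M).
Proof.
have comm_scalar (A : 'M[C]_n.+1) c : GRing.comm A c%:M.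
  by rewrite /GRing.comm -!mulmxE scalar_mxC.
apply: commrB; last exact: comm_scalar.
by apply: commr_sym; apply: commrB; [exact: commr_refl | exact: comm_scalar].
Qed.

(* With Y := (M - z) X, which the remaining factors annihilate, the entries of
   M^k X satisfy a (k+1) = z a k + (M^k Y)_ij. *)
Lemma annihilated_mxpow_bound n (M : 'M[C]_n.+1) (mu : R) (zs : seq C) :
  (forall z, z \in zs -> normc z < mu) ->
  forall X : 'M[C]_n.+1, \prod_(z <- zs) (M - z%:M) * X = 0 ->
  forall i j, exists K, forall k, normc ((M ^+ k * X) i j) <= K * mu ^+ k.
Proof.
elim: zs => [|z zs IH] zs_lt_mu X.
  rewrite big_nil mul1r => -> i j; exists 0 => k.
  by rewrite mulr0 mxE ComplexField.Normc.normc0 mul0r.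
rewrite big_cons => annX i j; set Y := (M - z%:M) * X.
have annY : \prod_(w <- zs) (M - w%:M) * Y = 0.
  rewrite /Y mulrA -annX; congr (_ * _); apply: esym; apply: commr_prod => w _.
  exact: comm_subr_scalar.
have [K YK] := IH (fun w w_in => zs_lt_mu w (mem_behead (s := z :: zs) w_in)) Y annY i j.
apply: (@recurrence_geometric_bound _ (fun k => (M ^+ k * Y) i j) z mu K) => //.
  by apply: zs_lt_mu; rewrite mem_head.
move=> k /=; have -> : M ^+ k.+1 * X = z *: (M ^+ k * X) + M ^+ k * Y.
  rewrite /Y mulrBl mulrBr -mulmxE mul_scalar_mx mulmxE scalerAr mulrA -exprSr.
  by rewrite addrC subrK.
by rewrite !mxE.
Qed.

Definition char_roots n (M : 'M[C]_n) := sval (closed_field_poly_normal (char_poly M)).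

Lemma char_poly_roots n (M : 'M[C]_n) :
  char_poly M = \prod_(z <- char_roots M) ('X - z%:P).
Proof.
rewrite /char_roots; case: (closed_field_poly_normal _) => zs /= ->.
by rewrite (monicP (char_poly_monic _)) scale1r.
Qed.

(* Cayley-Hamilton: the product of the M - z over the roots z of char_poly M vanishes. *)
Lemma mxpow_entry_bound n (M : 'M[C]_n) (mu : R) :
  (forall z, z \in char_roots M -> normc z < mu) ->
  forall i j, exists K, forall k, normc ((M ^+ k) i j) <= K * mu ^+ k.
Proof.
case: n M => [|n] M roots_lt_mu i j; first by case: i.
have [|K MK] := @annihilated_mxpow_bound n M mu _ roots_lt_mu 1 _ i j.
  rewrite mulr1 -(Cayley_Hamilton M) char_poly_roots rmorph_prod /=.
  by apply: eq_bigr => z _; rewrite rmorphB /= horner_mx_X horner_mx_C.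
by exists K => k; rewrite -[M ^+ k]mulr1.
Qed.

Lemma char_poly_trmx (F : fieldType) n (A : 'M[F]_n) : char_poly A^T = char_poly A.
Proof.
rewrite /char_poly -det_tr; congr (\det _); apply/matrixP => i j.
by rewrite !mxE eq_sym.
Qed.

(* A left eigenvector v of A for z gives z^k v_i = sum_j v_j (A^k)_ij;
   take i maximizing |v_i|. *)
Lemma char_root_row_sum_lower n (A : 'M[C]_n) z : z \in char_roots A ->
  exists i, forall k, normc z ^+ k <= \sum_j normc ((A ^+ k) i j).
Proof.
case: n A => [|n] A z_root.
  move: z_root; rewrite -root_prod_XsubC -char_poly_roots /char_poly det_mx00.
  by rewrite (negbTE (root1 _)).
have /eigenvalueP [v v_eigen v_neq0] : eigenvalue A^T z.
  by rewrite eigenvalue_root_char char_poly_trmx char_poly_roots root_prod_XsubC.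
have v_eigenX k : v *m (A ^+ k)^T = z ^+ k *: v.
  elim: k => [|k IH]; first by rewrite expr0 trmx1 mulmx1 expr0 scale1r.
  by rewrite exprSr -mulmxE trmx_mul mulmxA v_eigen -scalemxAl IH scalerA -exprS.
pose i := [arg max_(i > ord0) normc (v 0 i)]%O.
have v_le_vi j : normc (v 0 j) <= normc (v 0 i).
  by rewrite /i; case: arg_maxP => // i0 _; apply.
have vi_gt0 : 0 < normc (v 0 i).
  have [j vj_neq0] : exists j, v 0 j != 0.
    apply/existsP; apply: contraR v_neq0; rewrite negb_exists => /forallP v0.
    by apply/eqP/matrixP => a b; rewrite (ord1 a) mxE; apply/eqP/negPn/v0.
  apply: lt_le_trans (v_le_vi j); rewrite lt_neqAle normc_ge0 andbT eq_sym.
  by apply: contra vj_neq0 => /eqP /ComplexField.Normc.eq0_normc ->.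
exists i => k; rewrite -(ler_pM2r vi_gt0) -normcX -ComplexField.Normc.normcM.
have -> : z ^+ k * v 0 i = \sum_j v 0 j * (A ^+ k) i j.
  have := congr1 (fun u : 'rV[C]_n.+1 => u 0 i) (v_eigenX k); rewrite !mxE => <-.
  by apply: eq_bigr => j _; rewrite mxE.
apply: le_trans (ler_normc_sum _ _) _; rewrite mulr_suml; apply: ler_sum => j _.
by rewrite ComplexField.Normc.normcM mulrC ler_wpM2l ?normc_ge0.
Qed.

End SpectralBounds.

Lemma uniform_bound (R : realDomainType) (I : finType) (P : pred I)
    (F : I -> nat -> R) (g : nat -> R) :
  (forall k, 0 <= g k) -> (forall i, P i -> exists K, forall k, F i k <= K * g k) ->
  exists2 K, 0 <= K & forall i k, P i -> F i k <= K * g k.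
Proof.
move=> g_ge0 boundF.
have /boolp.choice [K FK] : forall i, exists K, P i -> forall k, F i k <= K * g k.
  move=> i; have [/boundF [K FK]|_] := boolP (P i); first by exists K.
  by exists 0.
exists (\sum_i `|K i|); first exact: sumr_ge0.
move=> i k Pi; apply: le_trans (FK i Pi k) _; apply: ler_wpM2r => //.
apply: le_trans (ler_norm _) _.
by rewrite (bigD1 i) //= lerDl sumr_ge0.
Qed.

Section GrowthRate.
Variable R : realType.

Lemma eventually_le_mulrn (a e : R) : 0 < e -> exists N, forall k, (N <= k)%N -> a <= e * k%:R.
Proof.
move=> e_gt0; exists (Num.truncn (a / e)).+1 => k k_ge.
have a_lt := truncnS_gt (a / e).
have k_ge' : ((Num.truncn (a / e)).+1%:R : R) <= k%:R by rewrite ler_nat.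
by rewrite mulrC -ler_pdivrMr //; lra.
Qed.

Lemma growth_rate_ub (w : nat -> R) (K nu e : R) :
  1 <= nu -> 0 < e -> (forall k, w k <= K * nu ^+ k) ->
  exists N, forall k, (N <= k)%N -> k%:R^-1 * ln (w k) <= ln nu + e.
Proof.
move=> nu_ge1 e_gt0 wK; have nu_gt0 : 0 < nu by apply: lt_le_trans nu_ge1.
pose K' := `|K| + 1; have K'_ge1 : 1 <= K' by rewrite lerDr.
have [N lnK'] := eventually_le_mulrn (ln K') e_gt0.
exists (maxn N 1) => k; rewrite geq_max => /andP [kN k_gt0].
rewrite ler_pdivrMl ?ltr0n //.
have [w_le0|w_gt0] := leP (w k) 0.
  by rewrite ln0 // mulr_ge0 ?ler0n // addr_ge0 ?ln_ge0 // ltW.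
have w_le : w k <= K' * nu ^+ k.
  apply: le_trans (wK k) _; apply: ler_wpM2r; first by rewrite exprn_ge0 ?ltW.
  by apply: le_trans (ler_norm _) _; rewrite lerDl.
have K'_gt0 : 0 < K' by apply: lt_le_trans K'_ge1.
apply: le_trans (_ : ln (K' * nu ^+ k) <= _).
  by rewrite ler_ln ?posrE ?mulr_gt0 ?exprn_gt0.
rewrite lnM ?posrE ?exprn_gt0 // lnXn // -mulr_natl.
by have := lnK' k kN; lra.
Qed.

Lemma growth_rate_lb (w : nat -> R) (c mu e : R) (d : nat) :
  0 < c -> 1 <= mu -> 0 < e ->
  (forall k, (d <= k)%N -> w k != 0 -> c * mu ^+ (k - d) <= w k) ->
  (forall k, (d <= k)%N -> w k = 0 -> mu = 1) ->
  exists N, forall k, (N <= k)%N -> ln mu - e <= k%:R^-1 * ln (w k).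
Proof.
move=> c_gt0 mu_ge1 e_gt0 w_ge w_eq0; have mu_gt0 : 0 < mu by apply: lt_le_trans mu_ge1.
have [N lnc] := eventually_le_mulrn (d%:R * ln mu - ln c) e_gt0.
exists (maxn N (maxn d 1)) => k; rewrite !geq_max => /and3P [kN kd k_gt0].
rewrite ler_pdivlMl ?ltr0n //.
have [w0|w_neq0] := eqVneq (w k) 0.
  by rewrite (w_eq0 k kd w0) ln1 w0 ln0 // sub0r mulrN oppr_le0 mulr_ge0 ?ler0n ?ltW.
have pos : 0 < c * mu ^+ (k - d) by rewrite mulr_gt0 // exprn_gt0.
apply: le_trans (_ : ln (c * mu ^+ (k - d)) <= _); last first.
  by rewrite ler_ln ?posrE ?w_ge // (lt_le_trans pos (w_ge k kd w_neq0)).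
rewrite lnM ?posrE ?exprn_gt0 // lnXn // -[ln mu *+ _]mulr_natr natrB //.
by have := lnc k kN; lra.
Qed.

(* Since ln 0 = 0, vanishing terms are compatible with the limit only when ln mu = 0. *)
Lemma cvg_growth_rate (w : nat -> R) (c mu : R) (d : nat) :
  1 <= mu -> 0 < c ->
  (forall nu, mu < nu -> exists K, forall k, w k <= K * nu ^+ k) ->
  (forall k, (d <= k)%N -> w k != 0 -> c * mu ^+ (k - d) <= w k) ->
  (forall k, (d <= k)%N -> w k = 0 -> mu = 1) ->
  ((fun k => k%:R^-1 * ln (w k)) @ \oo --> ln mu)%classic.
Proof.
move=> mu_ge1 c_gt0 w_le w_ge w_eq0; apply/cvgrPdist_le => e e_gt0.
have mu_gt0 : 0 < mu by apply: lt_le_trans mu_ge1.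
have e2_gt0 : 0 < e / 2 by rewrite divr_gt0.
pose nu := mu * expR (e / 2).
have ln_nu : ln nu = ln mu + e / 2 by rewrite lnM ?posrE ?expR_gt0 // expRK.
have nu_ge1 : 1 <= nu.
  by rewrite -[1]mulr1; apply: ler_pM => //; apply/ltW/pexpR_gt1.
have [|K wK] := w_le nu; first by rewrite ltr_pMr // pexpR_gt1.
have [N1 ub] := growth_rate_ub nu_ge1 e2_gt0 wK.
have [N2 lb] := growth_rate_lb c_gt0 mu_ge1 e_gt0 w_ge w_eq0.
exists (maxn N1 N2) => // k; rewrite /= geq_max => /andP [kN1 kN2].
rewrite distrC ler_distl lb //=; apply: le_trans (ub k kN1) _.
by rewrite ln_nu; lra.
Qed.

Lemma limn_esup_cvg (u : nat -> R) (l : R) :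
  (u @ \oo --> l)%classic -> limn_esup (fun k => (u k)%:E) = l%:E.
Proof.
by move=> u_l; apply: (cvg_limn_einf_sup _).2; apply/fine_cvgP; split; [apply: nearW|].
Qed.

Lemma ler_ln_eq0_or_ge1 (a b : R) :
  a = 0 \/ 1 <= a -> b = 0 \/ 1 <= b -> a <= b -> ln a <= ln b.
Proof.
have ln_ge0_or_ge1 x : x = 0 \/ 1 <= x -> 0 <= ln x.
  by case=> [->|x_ge1]; [rewrite ln0 | apply: ln_ge0].
case=> [->|a_ge1] b_cases a_le_b; first by rewrite ln0 // ln_ge0_or_ge1.
have b_ge1 : 1 <= b by apply: le_trans a_le_b.
by rewrite ler_ln ?posrE ?(lt_le_trans ltr01).
Qed.

End GrowthRate.

Section PathCounting.
Variables (V E : finType) (s r : E -> V).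
Local Open Scope nat_scope.

Fixpoint npaths k (v w : V) : nat :=
  if k is k'.+1 then \sum_(f | r f == w) npaths k' v (s f) else v == w.

Definition npaths_from k v := \sum_w npaths k v w.

Lemma sum_delta1 (v : V) : \sum_u (v == u : nat) = 1.
Proof. by rewrite (bigD1 v) //= eqxx big1 // => u /negbTE; rewrite eq_sym => ->. Qed.

Lemma sum_delta (F : V -> nat) v : \sum_u (v == u) * F u = F v.
Proof.
rewrite (bigD1 v) //= eqxx mul1n big1 ?addn0 // => u /negbTE.
by rewrite eq_sym => ->.
Qed.

Lemma npathsSl k v w : npaths k.+1 v w = \sum_(f | s f == v) npaths k (r f) w.
Proof.
elim: k w => [|k IH] w.
  rewrite /= big_mkcond [RHS]big_mkcond /=; apply: eq_bigr => f _.
  by rewrite [v == s f]eq_sym; case: (r f == w); case: (s f == v).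
have -> : npaths k.+2 v w = \sum_(g | r g == w) npaths k.+1 v (s g) by [].
under eq_bigr => g _ do rewrite IH.
by rewrite exchange_big.
Qed.

Lemma npaths_from0 v : npaths_from 0 v = 1.
Proof. exact: sum_delta1. Qed.

Lemma npaths_fromS k v : npaths_from k.+1 v = \sum_(f | s f == v) npaths_from k (r f).
Proof.
rewrite /npaths_from; under eq_bigr => w _ do rewrite npathsSl.
by rewrite exchange_big.
Qed.

Lemma reach_refl v : reach s r v v.
Proof. exact: connect0. Qed.

Lemma reach_trans u v w : reach s r u v -> reach s r v w -> reach s r u w.
Proof. exact: connect_trans. Qed.

Lemma reach_edge f : reach s r (s f) (r f).
Proof. by apply: connect1; apply/existsP; exists f; rewrite !eqxx. Qed.

Lemma component_refl u : u \in component s r u.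
Proof. by rewrite inE reach_refl. Qed.

Lemma reach_component u w : w \in component s r u -> reach s r u w.
Proof. by rewrite inE => /andP []. Qed.

Lemma npaths_from_reach v w :
  reach s r v w -> exists d, forall k, npaths_from k w <= npaths_from (d + k) v.
Proof.
move=> /connectP [p]; elim: p v => [|x p IH] v /=; first by move=> _ ->; exists 0.
move=> /andP [/existsP [f /andP [/eqP sf /eqP rf]] path_p] last_p.
have [d IHd] := IH x path_p last_p; exists d.+1 => k; apply: leq_trans (IHd k) _.
by rewrite addSn npaths_fromS (bigD1 f) ?sf //= rf leq_addr.
Qed.

Variable C : {set V}.

Fixpoint npaths_in k (v u : V) : nat :=
  if k is k'.+1 then \sum_(f | (s f == v) && (r f \in C)) npaths_in k' (r f) u
  else v == u.

Definition nexits m u := \sum_(f | (s f == u) && (r f \notin C)) npaths_from m (r f).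

(* Split a path from v at the first edge leaving C: either it never leaves C
   (after its initial vertex), or it stays in C for j steps, reaching u, then
   takes an exiting edge and continues freely for the remaining k - 1 - j steps. *)
Lemma npaths_from_exit_decomp k v :
  npaths_from k v = \sum_u npaths_in k v u
                    + \sum_(j < k) \sum_u npaths_in j v u * nexits (k.-1 - j) u.
Proof.
elim: k v => [|k IH] v.
  by rewrite npaths_from0 big_ord0 addn0 sum_delta1.
rewrite npaths_fromS (bigID (fun f => r f \in C)) /=.
under eq_bigr => f _ do rewrite IH.
rewrite big_split /= big_ord_recl /= sum_delta subn0 exchange_big /=.
rewrite -!addnA; congr (_ + _); rewrite addnC; congr (_ + _).
rewrite exchange_big /=; apply: eq_bigr => j _.
rewrite exchange_big /=; apply: eq_bigr => u _.
by rewrite -big_distrl /=; congr (_ * nexits _ _); rewrite /bump /=; lia.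
Qed.

Lemma npaths_in_out k w u : w \in C -> u \notin C -> npaths_in k w u = 0.
Proof.
elim: k w => [|k IH] w wC uC /=; first by case: eqP uC => // <-; rewrite wC.
by rewrite big1 // => f /andP [_ rfC]; apply: IH.
Qed.

Lemma sum_npaths_in_le k w : \sum_u npaths_in k w u <= npaths_from k w.
Proof.
elim: k w => [|k IH] w.
  by rewrite npaths_from0 sum_delta1.
rewrite npaths_fromS (bigID (fun f => r f \in C)) /= exchange_big /=.
by apply: leq_trans (leq_addr _ _); apply: leq_sum => f _; apply: IH.
Qed.

End PathCounting.

Section WordSums.
Variables (R : realType) (V E : finType) (s r : E -> V).

Lemma sum_tupleS (F : seq E -> R) k :
  \sum_(mu : k.+1.-tuple E) F mu = \sum_f \sum_(nu : k.-tuple E) F (f :: nu).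
Proof.
rewrite pair_big /= (reindex (fun p : E * k.-tuple E => [tuple of p.1 :: p.2])) //.
exists (fun mu : k.+1.-tuple E => (thead mu, [tuple of behead mu])).
  by case=> f nu _; congr pair; apply: val_inj.
by move=> mu _; rewrite [in RHS](tuple_eta mu).
Qed.

Lemma sum_ip_word k (a : V -> R) v :
  \sum_(mu : k.-tuple E) ip_word s r a mu v = \sum_w (npaths s r k v w)%:R * a w.
Proof.
elim: k a => [|k IH] a.
  rewrite (eq_bigr (fun _ => a v)); last by move=> mu _; rewrite (tuple0 mu).
  rewrite sumr_const card_tuple expn0 mulr1n (bigD1 v) //= eqxx mul1r big1 ?addr0 //.
  by move=> w /negbTE; rewrite eq_sym => ->; rewrite mul0r.
rewrite (sum_tupleS (fun mu => ip_word s r a mu v)) /=.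
under eq_bigr => f _ do rewrite IH.
have -> : \sum_f \sum_w (npaths s r k v w)%:R * (a (r f) * Defs.proj R (s f) w)
    = \sum_f (npaths s r k v (s f))%:R * a (r f).
  apply: eq_bigr => f _; rewrite (bigD1 (s f)) //= /Defs.proj eqxx mulr1 big1 ?addr0 //.
  by move=> w /negbTE; rewrite eq_sym => ->; rewrite !mulr0.
under [RHS]eq_bigr => w _ do rewrite natr_sum mulr_suml.
by rewrite (partition_big r xpredT) //=; apply: eq_bigr => w _; apply: eq_big => // f /eqP ->.
Qed.

Lemma word_sumE (t : V -> R) k :
  word_sum s r t k = \sum_v t v * (npaths_from s r k v)%:R.
Proof.
rewrite /word_sum /state_eval exchange_big /=; apply: eq_bigr => v _.
rewrite -mulr_sumr /ip_self sum_ip_word /npaths_from natr_sum.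
by congr (_ * _); apply: eq_bigr => w _; rewrite mulr1.
Qed.

End WordSums.

Lemma map_mxX (aR rR : pzSemiRingType) (f : {rmorphism aR -> rR}) n (M : 'M[aR]_n) k :
  map_mx f (M ^+ k) = map_mx f M ^+ k.
Proof.
elim: k => [|k IH]; first by rewrite !expr0 map_mx1.
by rewrite !exprS -IH -!mulmxE map_mxM.
Qed.

Section SpectralRadius.
Variable R : realType.
Local Notation normc := (@ComplexField.Normc.normc R).
Local Notation mxC M := (map_mx (real_complex R) M).

Lemma spectral_radiusE n (M : 'M[R]_n) :
  spectral_radius M = \big[Num.max/0]_(z <- char_roots (mxC M)) normc z.
Proof. by []. Qed.

Lemma spectral_radius_ge0 n (M : 'M[R]_n) : 0 <= spectral_radius M.
Proof.
rewrite spectral_radiusE; elim: (char_roots _) => [|z zs IH]; first by rewrite big_nil.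
by rewrite big_cons le_max IH orbT.
Qed.

Lemma normc_le_spectral_radius n (M : 'M[R]_n) z :
  z \in char_roots (mxC M) -> normc z <= spectral_radius M.
Proof. by move=> z_root; rewrite spectral_radiusE; apply: le_bigmax_seq. Qed.

Lemma spectral_radius_attained n (M : 'M[R]_n) : spectral_radius M != 0 ->
  exists2 z, z \in char_roots (mxC M) & normc z = spectral_radius M.
Proof.
rewrite spectral_radiusE; elim: (char_roots _) => [|z zs IH]; first by rewrite big_nil eqxx.
rewrite big_cons; have [_|_] := leP (normc z) (\big[Num.max/0]_(w <- zs) normc w).
  by case/IH => w w_in <-; exists w; rewrite // in_cons w_in orbT.
by exists z; rewrite ?mem_head.
Qed.

Variables (V E : finType) (s r : E -> V) (C : {set V}).
Local Notation A := (sub_adj R s r C).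
Local Notation npaths_in := (npaths_in s r C).

Lemma sub_adjX k (i j : 'I_#|C|) :
  (A ^+ k) i j = (npaths_in k (enum_val i) (enum_val j))%:R.
Proof.
elim: k i j => [|k IH] i j; first by rewrite expr0 mxE /= (inj_eq enum_val_inj).
rewrite exprS -mulmxE mxE; under eq_bigr => l _ do rewrite IH mxE.
rewrite [npaths_in _ _ _]/= (partition_big r (mem C)) /=; last by move=> f /andP [].
rewrite natr_sum [RHS]big_enum_val /=; apply: eq_bigr => l _.
rewrite (eq_bigr (fun=> npaths_in k (enum_val l) (enum_val j))); last first.
  by move=> f /andP [_ /eqP ->].
rewrite sum_nat_const natrM; congr (_%:R * _); apply: eq_card => f.
rewrite !inE unfold_in /=.
by case: (r f =P enum_val l) => [->|]; rewrite ?enum_valP ?andbT ?andbF.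
Qed.

Lemma normc_sub_adjX k (i j : 'I_#|C|) :
  normc ((mxC A ^+ k) i j) = (npaths_in k (enum_val i) (enum_val j))%:R.
Proof. by rewrite -map_mxX mxE sub_adjX normc_real ger0_norm. Qed.

Lemma npaths_in_upper (mu : R) : spectral_radius A < mu ->
  exists K, forall k x y, x \in C -> y \in C ->
    ((npaths_in k x y)%:R : R) <= K * mu ^+ k.
Proof.
move=> rho_lt_mu.
have mu_gt0 : 0 < mu by apply: le_lt_trans rho_lt_mu; apply: spectral_radius_ge0.
have [|K _ entryK] := @uniform_bound R _ predT
    (fun p : 'I_#|C| * 'I_#|C| => fun k => normc ((mxC A ^+ k) p.1 p.2)) _
    (fun k => exprn_ge0 k (ltW mu_gt0)).
  move=> p _; apply: mxpow_entry_bound => z z_root.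
  exact: le_lt_trans (normc_le_spectral_radius z_root) rho_lt_mu.
exists K => k x y xC yC.
rewrite -(enum_rankK_in xC xC) -(enum_rankK_in xC yC) -normc_sub_adjX.
exact: (entryK (enum_rank_in xC x, enum_rank_in xC y)).
Qed.

Lemma npaths_in_lower : spectral_radius A != 0 -> exists2 x, x \in C &
  forall k, spectral_radius A ^+ k <= ((\sum_(y in C) npaths_in k x y)%N%:R : R).
Proof.
case/spectral_radius_attained => z z_root <-.
have [i rowi] := char_root_row_sum_lower z_root.
exists (enum_val i); first exact: enum_valP.
move=> k; apply: le_trans (rowi k) _; rewrite natr_sum [X in _ <= X]big_enum_val /=.
by under eq_bigr do rewrite normc_sub_adjX.
Qed.

(* The lower bound makes the integer path counts positive, hence >= 1, which
   a spectral radius in (0, 1) would force to decay geometrically to 0. *)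
Lemma spectral_radius_sub_adj_eq0_or_ge1 : spectral_radius A = 0 \/ 1 <= spectral_radius A.
Proof.
set rho := spectral_radius A.
have [rho_eq0|rho_neq0] := eqVneq rho 0; [by left | right].
rewrite leNgt; apply/negP => rho_lt1.
have rho_gt0 : 0 < rho by rewrite lt_neqAle eq_sym rho_neq0 spectral_radius_ge0.
have [x xC rho_le] := npaths_in_lower rho_neq0.
pose mu := (1 + rho) / 2.
have rho_lt_mu : rho < mu by rewrite /mu; lra.
have [K pathsK] := npaths_in_upper rho_lt_mu.
have one_le k : 1 <= (#|C|%:R * K) * mu ^+ k.
  have paths_ge1 : 1 <= ((\sum_(y in C) npaths_in k x y)%N%:R : R).
    rewrite ler1n lt0n; apply: contraTN (rho_le k) => /eqP ->.
    by rewrite -ltNge exprn_gt0.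
  apply: le_trans paths_ge1 _; rewrite natr_sum.
  apply: le_trans (ler_sum _ (fun y yC => pathsK k x y xC yC)) _.
  by rewrite sumr_const -mulrA mulr_natl.
have CK_gt0 : 0 < #|C|%:R * K by have := one_le 0%N; rewrite expr0 mulr1; lra.
have mu_lt1 : `|mu| < 1 by rewrite ger0_norm /mu; lra.
have [N _ muN] := (cvgrPdist_lt _ 0).1 (cvg_expr mu_lt1) _ (divr_gt0 ltr01 CK_gt0).
have := muN N (leqnn N); rewrite /= sub0r normrN ger0_norm; last first.
  by apply: exprn_ge0; rewrite /mu; lra.
by rewrite ltr_pdivlMr // => muN_lt; have := one_le N; lra.
Qed.

End SpectralRadius.

Lemma sum_exprD_le (R : realFieldType) (x y : R) k : 0 <= x -> x < y ->
  \sum_(j < k) x ^+ j * y ^+ (k.-1 - j) <= y ^+ k / (y - x).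
Proof.
move=> x_ge0 x_lt_y; rewrite ler_pdivlMr ?subr_gt0 //.
have -> : (\sum_(j < k) x ^+ j * y ^+ (k.-1 - j)) * (y - x) = y ^+ k - x ^+ k.
  by rewrite subrXX mulrC; congr (_ * _); apply: eq_bigr => j _; rewrite mulrC.
by rewrite lerBlDr lerDl exprn_ge0.
Qed.

Section GrowthUpperBound.
Variables (R : realType) (V E : finType) (s r : E -> V).
Local Notation rho C := (spectral_radius (sub_adj R s r C)).
Local Notation npaths_from := (npaths_from s r).

Section ExitBound.
Variables (C : {set V}) (v : V) (mu1 mu K1 K2 : R).
Hypotheses (vC : v \in C) (mu1_ge0 : 0 <= mu1) (mu1_lt_mu : mu1 < mu) (K2_ge0 : 0 <= K2).
Hypothesis inside_bound :
  forall k u, u \in C -> ((npaths_in s r C k v u)%:R : R) <= K1 * mu1 ^+ k.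
Hypothesis exit_bound :
  forall m u, u \in C -> ((nexits s r C m u)%:R : R) <= K2 * mu ^+ m.

Lemma npaths_from_exit_bound : exists K, forall k, (npaths_from k v)%:R <= K * mu ^+ k.
Proof.
have mu_gt0 : 0 < mu by apply: le_lt_trans mu1_lt_mu.
have K1_ge0 : 0 <= K1.
  by have := inside_bound 0 vC; rewrite /= eqxx expr0 mulr1; apply: le_trans.
exists (#|V|%:R * K1 + #|V|%:R * K1 * K2 / (mu - mu1)) => k.
rewrite (npaths_from_exit_decomp s r C) natrD mulrDl; apply: lerD.
  have -> : #|V|%:R * K1 * mu ^+ k = \sum_(u : V) K1 * mu ^+ k.
    by rewrite sumr_const -mulrA mulr_natl.
  rewrite natr_sum; apply: ler_sum => u _.
  have [uC|uC] := boolP (u \in C); last first.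
    by rewrite npaths_in_out // mulr_ge0 ?exprn_ge0 ?(ltW mu_gt0).
  apply: le_trans (inside_bound k uC) _; apply: ler_wpM2l => //.
  by rewrite lerXn2r ?nnegrE ?(ltW mu_gt0) ?(ltW mu1_lt_mu).
rewrite natr_sum; apply: le_trans (_ : \sum_(j < k)
    #|V|%:R * K1 * K2 * (mu1 ^+ j * mu ^+ (k.-1 - j)) <= _); last first.
  have -> : #|V|%:R * K1 * K2 / (mu - mu1) * mu ^+ k
      = #|V|%:R * K1 * K2 * (mu ^+ k / (mu - mu1)) by ring.
  rewrite -mulr_sumr; apply: ler_wpM2l; first by rewrite !mulr_ge0.
  exact: sum_exprD_le.
apply: ler_sum => j _; rewrite natr_sum.
have -> : #|V|%:R * K1 * K2 * (mu1 ^+ j * mu ^+ (k.-1 - j))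
    = \sum_(u : V) K1 * mu1 ^+ j * (K2 * mu ^+ (k.-1 - j)).
  by rewrite sumr_const -mulr_natl; ring.
apply: ler_sum => u _; rewrite natrM; have [uC|uC] := boolP (u \in C).
  by apply: ler_pM; rewrite ?ler0n ?inside_bound ?exit_bound.
by rewrite npaths_in_out // mul0r !mulr_ge0 ?exprn_ge0 ?(ltW mu_gt0).
Qed.

End ExitBound.

Lemma nexits_le (C : {set V}) m u (B : R) :
  (forall f, s f = u -> r f \notin C -> ((npaths_from m (r f))%:R : R) <= B) -> 0 <= B ->
  ((nexits s r C m u)%:R : R) <= #|E|%:R * B.
Proof.
move=> exit_le B_ge0; rewrite mulr_natl -sumr_const /nexits natr_sum.
rewrite [X in _ <= X](bigID (fun f => (s f == u) && (r f \notin C))) /=.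
rewrite -[X in X <= _]addr0 lerD ?sumr_ge0 //.
by apply: ler_sum => f /andP [/eqP sfu rfC]; apply: exit_le.
Qed.

Definition reach_radius v := \big[Num.max/0]_(w | reach s r v w) rho (component s r w).

Lemma le_reach_radius v w : reach s r v w -> rho (component s r w) <= reach_radius v.
Proof. exact: le_bigmax_cond. Qed.

Lemma reach_radius_ge0 v : 0 <= reach_radius v.
Proof. exact: le_trans (spectral_radius_ge0 _) (le_reach_radius (reach_refl s r v)). Qed.

Lemma reach_radius_reach v w : reach s r v w -> reach_radius w <= reach_radius v.
Proof.
move=> vw; apply: bigmax_le => [|x wx]; first exact: reach_radius_ge0.
exact/le_reach_radius/(reach_trans vw).
Qed.

(* Induction on the number of vertices reachable from v: an edge f leaving the
   component of v leads to a vertex r f reaching strictly fewer vertices. *)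
Lemma npaths_from_upper v mu : reach_radius v < mu ->
  exists K, forall k, (npaths_from k v)%:R <= K * mu ^+ k.
Proof.
have [n] := ubnP #|[set w | reach s r v w]|; elim: n v => // n IH v card_lt radius_lt.
set C := component s r v.
have vC : v \in C by apply: component_refl.
have mu_gt0 : 0 < mu by apply: le_lt_trans radius_lt; apply: reach_radius_ge0.
pose mu1 := (reach_radius v + mu) / 2.
have rho_le : rho C <= reach_radius v by apply/le_reach_radius/reach_refl.
have mu1_ge0 : 0 <= mu1 by have := reach_radius_ge0 v; rewrite /mu1; lra.
have [|K1 inside] := @npaths_in_upper R V E s r C mu1; first by rewrite /mu1; lra.
pose exits f := (s f \in C) && (r f \notin C).
have [|K2 K2_ge0 exitK] := @uniform_bound R E exits
    (fun f k => (npaths_from k (r f))%:R) (fun k => mu ^+ k)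
    (fun k => exprn_ge0 k (ltW mu_gt0)).
  move=> f /andP [sfC rfC].
  have v_rf : reach s r v (r f) by apply: reach_trans (reach_component sfC) (reach_edge s r f).
  apply: IH (le_lt_trans (reach_radius_reach v_rf) radius_lt).
  rewrite -ltnS; apply: leq_trans card_lt; apply: proper_card; apply/properP; split.
    by apply/fintype.subsetP => w; rewrite !inE; apply: reach_trans.
  exists v; rewrite !inE ?reach_refl //.
  by apply: contra rfC => rf_v; rewrite inE v_rf rf_v.
apply: (@npaths_from_exit_bound C v mu1 mu K1 (#|E|%:R * K2)) => //.
- by rewrite /mu1; lra.
- by rewrite mulr_ge0.
- by move=> k u uC; apply: inside.
move=> m u uC; rewrite -mulrA; apply: nexits_le => [f sfu rfC|]; last first.
  by rewrite mulr_ge0 ?exprn_ge0 ?(ltW mu_gt0).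
by apply: exitK; rewrite /exits sfu uC.
Qed.

End GrowthUpperBound.

Section Entropy.
Variables (R : realType) (V E : finType) (s r : E -> V) (t : V -> R).
Hypotheses (t_ge0 : forall v, 0 <= t v) (t_sum1 : \sum_v t v = 1).
Local Notation lambda u := (spectral_radius (sub_adj R s r (component s r u))).
Local Notation word_sum := (word_sum s r t).

Definition tau_communicated u :=
  [exists v, (t v != 0) && communicated s r (component s r u) v].

Lemma tau_communicated_reach v w : t v != 0 -> reach s r v w -> tau_communicated w.
Proof.
move=> tv_neq0 vw; apply/existsP; exists v; rewrite tv_neq0 /=.
by apply/existsP; exists w; rewrite component_refl vw.
Qed.

Lemma exists_tau_communicated : exists u, tau_communicated u.
Proof.
have [v tv_neq0|t0] := pickP (fun v => t v != 0).
  by exists v; apply: tau_communicated_reach tv_neq0 (reach_refl s r v).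
by move: t_sum1; rewrite big1 => [/eqP|v _]; [rewrite eq_sym oner_eq0 | apply/eqP/negbFE/t0].
Qed.

Lemma exists_max_radius : exists2 u, tau_communicated u &
  forall u', tau_communicated u' -> lambda u' <= lambda u.
Proof.
have [u0 u0_tc] := exists_tau_communicated.
by case: (@arg_maxP _ _ _ u0 tau_communicated (fun u => lambda u)) => // u; exists u.
Qed.

Definition min_weight := \big[Num.min/1]_(v | t v != 0) t v.

Lemma min_weight_gt0 : 0 < min_weight.
Proof.
apply: lt_bigmin => [|v tv_neq0]; first exact: ltr01.
by rewrite lt_neqAle eq_sym tv_neq0 t_ge0.
Qed.

Lemma min_weight_le_word_sum k : word_sum k != 0 -> min_weight <= word_sum k.
Proof.
have term_ge0 v : 0 <= t v * (npaths_from s r k v)%:R by rewrite mulr_ge0 ?ler0n.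
rewrite word_sumE psumr_neq0 // => /hasP [v _ term_gt0].
rewrite (bigD1 v) //=; apply: le_trans (_ : t v * (npaths_from s r k v)%:R <= _); last first.
  by rewrite lerDl sumr_ge0.
have tv_neq0 : t v != 0 by apply: contraTneq term_gt0 => ->; rewrite mul0r ltxx.
have paths_gt0 : (0 < npaths_from s r k v)%N.
  by rewrite lt0n; apply: contraTneq term_gt0 => ->; rewrite mulr0 ltxx.
apply: (@le_trans _ _ (t v)); first exact: bigmin_le_cond.
by rewrite -[X in X <= _]mulr1 ler_wpM2l // ler1n.
Qed.

Lemma word_sum_upper (rs : R) : (forall u, tau_communicated u -> lambda u <= rs) ->
  forall mu, rs < mu -> exists K, forall k, word_sum k <= K * mu ^+ k.
Proof.
move=> lambda_le mu rs_lt_mu.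
have rs_ge0 : 0 <= rs.
  by have [u /lambda_le] := exists_tau_communicated; apply: le_trans (spectral_radius_ge0 _).
have mu_gt0 : 0 < mu by apply: le_lt_trans rs_lt_mu.
have [|K _ pathsK] := @uniform_bound R V (fun v => t v != 0)
    (fun v k => (npaths_from s r k v)%:R) (fun k => mu ^+ k)
    (fun k => exprn_ge0 k (ltW mu_gt0)).
  move=> v tv_neq0; apply: npaths_from_upper; apply: le_lt_trans rs_lt_mu.
  by apply: bigmax_le => // w vw; apply/lambda_le/(tau_communicated_reach tv_neq0).
exists K => k; have -> : K * mu ^+ k = \sum_v t v * (K * mu ^+ k).
  by rewrite -mulr_suml t_sum1 mul1r.
rewrite word_sumE; apply: ler_sum => v _.
have [tv_neq0|/negPn/eqP ->] := boolP (t v != 0); last by rewrite !mul0r.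
by apply: ler_wpM2l; [exact: t_ge0 | exact: pathsK].
Qed.

Lemma word_sum_lower u : tau_communicated u -> lambda u != 0 ->
  exists2 c, 0 < c & exists d, forall k, c * lambda u ^+ k <= word_sum (d + k).
Proof.
case/existsP => v /andP [tv_neq0 /existsP [w /andP [wC vw]]] lambda_neq0.
set C := component s r u in wC lambda_neq0 *.
have [x xC lambda_le] := npaths_in_lower lambda_neq0.
have vx : reach s r v x.
  apply: reach_trans vw (reach_trans _ (reach_component xC)).
  by move: wC; rewrite inE => /andP [].
have [d pathsd] := npaths_from_reach vx.
exists (t v); first by rewrite lt_neqAle eq_sym tv_neq0 t_ge0.
exists d => k; rewrite word_sumE (bigD1 v) //=.
apply: le_trans (_ : t v * (npaths_from s r (d + k) v)%:R <= _); last first.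
  by rewrite lerDl sumr_ge0 // => y _; rewrite mulr_ge0 ?ler0n.
apply: ler_wpM2l => //; apply: le_trans (lambda_le k) _; rewrite ler_nat.
apply: leq_trans (pathsd k); apply: leq_trans (sum_npaths_in_le s r C k x).
by rewrite [X in (_ <= X)%N](bigID (mem C)) leq_addr.
Qed.

Lemma word_sum_growth u : tau_communicated u ->
  (forall u', tau_communicated u' -> lambda u' <= lambda u) ->
  ((fun k => k%:R^-1 * ln (word_sum k)) @ \oo --> ln (lambda u))%classic.
Proof.
move=> u_tc lambda_max; have upper := word_sum_upper lambda_max.
have [lambda0|lambda_ge1] := spectral_radius_sub_adj_eq0_or_ge1 R s r (component s r u).
  rewrite lambda0 ln0 // -ln1; apply: (@cvg_growth_rate _ _ min_weight 1 0) => //.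
  - exact: min_weight_gt0.
  - by move=> nu nu_gt1; apply: upper; rewrite lambda0 (lt_trans ltr01).
  - by move=> k _ ws_neq0; rewrite expr1n mulr1 min_weight_le_word_sum.
have lambda_gt0 : 0 < lambda u by apply: lt_le_trans lambda_ge1.
have [c c_gt0 [d lower]] := word_sum_lower u_tc (lt0r_neq0 lambda_gt0).
apply: (@cvg_growth_rate _ _ c _ d) => // k kd; first by move=> _; rewrite -{2}(subnKC kd).
move=> ws0; have := lower (k - d)%N; rewrite subnKC // ws0.
by rewrite leNgt mulr_gt0 ?exprn_gt0.
Qed.

End Entropy.

Theorem proposition8p6 (R : realType) (V E : finType) (s r : E -> V)
    (t : V -> R) :
  is_prob_vector t ->
  exists2 u : V,
    [exists v, (t v != 0) && communicated s r (component s r u) v] &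
    entropy s r t = (ln (spectral_radius (@sub_adj R V E s r (component s r u))))%:E /\
    (forall u' : V,
      [exists v, (t v != 0) && communicated s r (component s r u') v] ->
      ln (spectral_radius (@sub_adj R V E s r (component s r u')))
        <= ln (spectral_radius (@sub_adj R V E s r (component s r u)))).
Proof.
move=> [t_ge0 t_sum1].
have [u u_tc lambda_max] := exists_max_radius s r t_sum1.
exists u => //; split; first exact/limn_esup_cvg/(word_sum_growth t_ge0 t_sum1).
move=> u' u'_tc; apply: ler_ln_eq0_or_ge1 (lambda_max u' u'_tc);
  exact: spectral_radius_sub_adj_eq0_or_ge1.
Qed.
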